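(* Let $s\in\Sigma^n$ and let $b=s[0]$ be its first symbol. Then \[P(H(s)) - P(H(ICR(s))) \equiv e_b \mod K.\]
   Context: Let $k\ge 1$ be an integer, $\Sigma=\{0,1,\dots,k-1\}$ with arithmetic on symbols taken modulo $k$, and $n\ge 1$. For $s\in\Sigma^n$ write $s=s[0]s[1]\cdots s[n-1]$. The histogram of a string $s$ is $H(s):\Sigma\to\mathbb{Z}$, $H(s)(c)=$ number of occurrences of $c$ in $s$. For $b\in\Sigma$, $e_b:\Sigma\to\mathbb{Z}$ is the indicator function of $b$. $K:\Sigma\to\mathbb{Z}$ is the constant function $1$. For $H:\Sigma\to\mathbb{Z}$, its partial sum is $P(H):\Sigma\to\mathbb{Z}$, $P(H)(i)=\sum_{j=0}^{i}H(j)$. For $F,G:\Sigma\to\mathbb{Z}$, $F\equiv G \mod K$ means $F-G$ is an integer multiple of $K$. The incremented cycle register rule is $ICR(s)=s[1]s[2]\cdots s[n-1](s[0]+1)$. *)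

From HB Require Import structures.
From mathcomp Require Import all_boot all_order all_algebra.
Set Implicit Arguments. Unset Strict Implicit. Unset Printing Implicit Defensive.
Import GRing.Theory.
Local Open Scope ring_scope.

(* Alphabet Sigma = 'I_k = {0,...,k-1}; successor modulo k is ordS
   (val (ordS c) = (c + 1) %% k). Strings are sequences over 'I_k. *)

Definition hist k (s : seq 'I_k) : 'I_k -> int := fun c => (count_mem c s)%:Z.

Definition ind k (b : 'I_k) : 'I_k -> int := fun c => (c == b)%:Z.

Definition psum k (H : 'I_k -> int) : 'I_k -> int :=
  fun i => \sum_(j < k | (val j <= val i)%N) H j.

(* F == G mod K (K the constant function 1): F - G = m * K for some integer m. *)
Definition eqmodK k (F G : 'I_k -> int) : Prop :=
  exists m : int, forall c, F c - G c = m * 1.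

Definition ICR k (s : seq 'I_k) : seq 'I_k :=
  match s with
  | [::] => [::]
  | x :: t => rcons t (ordS x)
  end.

From HB Require Import structures.
From mathcomp Require Import all_boot all_order all_algebra.

Set Implicit Arguments.
Unset Strict Implicit.
Unset Printing Implicit Defensive.

Import GRing.Theory.
Local Open Scope ring_scope.

(* Moving the first symbol b to the end as b+1 changes the histogram by
   e_b - e_(b+1).  The partial sum of an indicator e_a is the step function
   [a <= c], so the difference of partial sums is [b <= c] - [b+1 <= c], which
   is e_b when b+1 < k, and e_b - K when b = k-1, because b+1 wraps to 0. *)

Lemma hist_cons k (x : 'I_k) (s : seq 'I_k) c :
  hist (x :: s) c = ind x c + hist s c.
Proof. by rewrite /hist /ind /= eq_sym PoszD. Qed.

Lemma hist_rcons k (s : seq 'I_k) (x : 'I_k) c :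
  hist (rcons s x) c = hist s c + ind x c.
Proof. by rewrite /hist /ind -cats1 count_cat /= eq_sym addn0 PoszD. Qed.

Lemma hist_ICR_cons k (x : 'I_k) (s : seq 'I_k) c :
  hist (x :: s) c - hist (ICR (x :: s)) c = ind x c - ind (ordS x) c.
Proof. by rewrite /= hist_cons hist_rcons opprD addrA addrK. Qed.

Lemma eq_psum k (F G : 'I_k -> int) : F =1 G -> psum F =1 psum G.
Proof. by move=> eqFG c; apply: eq_bigr => j _; exact: eqFG. Qed.

Lemma psumB k (F G : 'I_k -> int) c :
  psum (fun j => F j - G j) c = psum F c - psum G c.
Proof. exact: sumrB. Qed.

Lemma psum_ind k (a c : 'I_k) : psum (ind a) c = (a <= c)%N%:Z.
Proof.
rewrite /psum /ind; have [le_ac | lt_ca] := leqP a c.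
  by rewrite (bigD1 a) //= eqxx big1 ?addr0 // => j /andP[_ /negbTE ->].
rewrite big1 // => j le_jc; case: eqP => // eq_ja.
by rewrite -eq_ja ltnNge le_jc in lt_ca.
Qed.

Lemma psum_ind_ordS k (a c : 'I_k) :
  psum (ind a) c - psum (ind (ordS a)) c = ind a c - (a.+1 == k)%:Z.
Proof.
rewrite !psum_ind /ind /= -(inj_eq val_inj) /=.
have lt_ak := ltn_ord a.
have [lt_a1k | ge_a1k] := ltnP a.+1 k.
  by rewrite modn_small // (ltn_eqF lt_a1k) subr0; case: ltngtP.
have eq_a1k : a.+1 = k by apply/eqP; rewrite eqn_leq lt_ak ge_a1k.
rewrite eq_a1k modnn eqxx leq0n.
have le_ca : (c <= a)%N by rewrite -ltnS eq_a1k.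
by move: le_ca; case: ltngtP.
Qed.

Theorem lemma1 (k : nat) (hk : (1 <= k)%N) (n : nat) (hn : (1 <= n)%N)
  (s : n.-tuple 'I_k) :
  let b := tnth s (Ordinal hn) in
  eqmodK (fun c => psum (hist s) c - psum (hist (ICR s)) c) (ind b).
Proof.
case: s => [[|x t] size_s]; first by case: n hn size_s.
rewrite /= (_ : tnth _ _ = x) //.
exists (- (x.+1 == k)%:Z) => c; rewrite mulr1.
rewrite -psumB (eq_psum (hist_ICR_cons x t)) psumB psum_ind_ordS.
by rewrite addrAC subrr add0r.
Qed.
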